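(* Let $\mathbf{w}_1,\dots,\mathbf{w}_6:\mathbb{R}\to\mathbb{R}^7$ be differentiable functions satisfying $\frac{d\mathbf{w}_1}{dt}=2\mathbf{w}_2\times\mathbf{w}_3$, $\frac{d\mathbf{w}_2}{dt}=2\mathbf{w}_1\times\mathbf{w}_3$, $\frac{d\mathbf{w}_3}{dt}=-2\mathbf{w}_1\times\mathbf{w}_2$, $\frac{d\mathbf{w}_4}{dt}=\mathbf{w}_1\times\mathbf{w}_5+\mathbf{w}_2\times\mathbf{w}_5-\mathbf{w}_3\times\mathbf{w}_4$, $\frac{d\mathbf{w}_5}{dt}=-\mathbf{w}_1\times\mathbf{w}_4+\mathbf{w}_2\times\mathbf{w}_4+\mathbf{w}_3\times\mathbf{w}_5$, $\frac{d\mathbf{w}_6}{dt}=\mathbf{w}_4\times\mathbf{w}_5$, and define $F:\mathbb{R}^3\to\mathbb{R}^7$ by $F(y_1,y_2,t)=\tfrac12(y_1^2+y_2^2)\mathbf{w}_1(t)+\tfrac12(y_1^2-y_2^2)\mathbf{w}_2(t)+y_1y_2\mathbf{w}_3(t)+y_1\mathbf{w}_4(t)+y_2\mathbf{w}_5(t)+\mathbf{w}_6(t)$. Then $\frac{\partial F}{\partial y_1}\times\frac{\partial F}{\partial y_2}=\frac{\partial F}{\partial t}$ everywhere, and $dF$ is injective at a point $(y_1,y_2,t)$ if and only if $\frac{\partial F}{\partial y_1}$ and $\frac{\partial F}{\partial y_2}$ are linearly independent there. In particular $F$ is an immersion at $(0,0,0)$ if and only if $\mathbf{w}_4(0)$ and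 $\mathbf{w}_5(0)$ are linearly independent.
   Context: Let $(x_1,\dots,x_7)$ be coordinates on $\mathbb{R}^7$ with Euclidean metric $g$, and write $dx_{ijk}=dx_i\wedge dx_j\wedge dx_k$. Define $\varphi=dx_{123}+dx_{145}+dx_{167}+dx_{246}-dx_{257}-dx_{347}-dx_{356}$. The cross product $\times$ on $\mathbb{R}^7$ is defined by $g(u\times v,w)=\varphi(u,v,w)$ for all $u,v,w\in\mathbb{R}^7$. *)

From HB Require Import structures.
From mathcomp Require Import all_boot all_order all_algebra.
From mathcomp Require Import all_classical all_reals all_analysis.
Set Implicit Arguments. Unset Strict Implicit. Unset Printing Implicit Defensive.
Import Order.TTheory GRing.Theory Num.Theory.
Import numFieldNormedType.Exports.
Local Open Scope ring_scope.

Section G2.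
Variable R : realType.

(* coordinate indices: paper's x_1..x_7 are 'I_7 indices 0..6 *)
Definition i7 (k : nat) : 'I_7 := inord k.

(* dx_i ^ dx_j ^ dx_k (u,v,w) = det of the 3x3 minor (paper's 1-based i j k) *)
Definition dx3 (i j k : nat) (u v w : 'rV[R]_7) : R :=
  let a := fun (x : 'rV[R]_7) (l : nat) => x 0 (i7 l.-1) in
  a u i * (a v j * a w k - a v k * a w j)
  - a u j * (a v i * a w k - a v k * a w i)
  + a u k * (a v i * a w j - a v j * a w i).

Definition phi (u v w : 'rV[R]_7) : R :=
  dx3 1 2 3 u v w + dx3 1 4 5 u v w + dx3 1 6 7 u v w + dx3 2 4 6 u v w
  - dx3 2 5 7 u v w - dx3 3 4 7 u v w - dx3 3 5 6 u v w.

Definition e7 (k : 'I_7) : 'rV[R]_7 := delta_mx 0 k.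

(* cross product: g(u x v, w) = phi(u,v,w) with g Euclidean, i.e.
   the k-th coordinate of u x v is phi(u, v, e_k). *)
Definition cross (u v : 'rV[R]_7) : 'rV[R]_7 := \row_k phi u v (e7 k).

Definition F (w1 w2 w3 w4 w5 w6 : R -> 'rV[R]_7) (y1 y2 t : R) : 'rV[R]_7 :=
  (2^-1 * (y1 ^+ 2 + y2 ^+ 2)) *: w1 t + (2^-1 * (y1 ^+ 2 - y2 ^+ 2)) *: w2 t
  + (y1 * y2) *: w3 t + y1 *: w4 t + y2 *: w5 t + w6 t.

Definition dy1 (G : R -> R -> R -> 'rV[R]_7) (y1 y2 t : R) : 'rV[R]_7 :=
  derive1 (fun s => G s y2 t) y1.
Definition dy2 (G : R -> R -> R -> 'rV[R]_7) (y1 y2 t : R) : 'rV[R]_7 :=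
  derive1 (fun s => G y1 s t) y2.
Definition dt (G : R -> R -> R -> 'rV[R]_7) (y1 y2 t : R) : 'rV[R]_7 :=
  derive1 (fun s => G y1 y2 s) t.

Definition dG (G : R -> R -> R -> 'rV[R]_7) (y1 y2 t : R) (h : 'rV[R]_3)
  : 'rV[R]_7 :=
  h 0 (@inord 2 0) *: dy1 G y1 y2 t + h 0 (@inord 2 1) *: dy2 G y1 y2 t
  + h 0 (@inord 2 2) *: dt G y1 y2 t.

End G2.

From HB Require Import structures.
From mathcomp Require Import all_boot all_order all_algebra.
From mathcomp Require Import all_classical all_reals all_analysis.
From mathcomp.algebra_tactics Require Import ring.

(* The partial derivatives F_1 = dF/dy1 and F_2 = dF/dy2 are affine in (y1, y2)
   with coefficients w_1, ..., w_5.  Expanding F_1 x F_2 by bilinearity and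
   antisymmetry gives a combination of the w_i x w_j which the ODE system
   identifies with dF/dt.  Hence dF(h) = h1 F_1 + h2 F_2 + h3 (F_1 x F_2), and dF
   is injective iff F_1, F_2, F_1 x F_2 are linearly independent.  Since
   F_1 x F_2 is orthogonal to F_1 and F_2 and, by the Lagrange identity
   |a x b|^2 = |a|^2 |b|^2 - (a.b)^2, vanishes only when F_1 and F_2 are
   dependent, this happens iff F_1 and F_2 are independent.  At the origin
   F_1 = w_4(0) and F_2 = w_5(0). *)

Set Implicit Arguments.
Unset Strict Implicit.
Unset Printing Implicit Defensive.
Import Order.TTheory GRing.Theory Num.Theory.
Import numFieldNormedType.Exports.
Local Open Scope ring_scope.

Section LinearCombination.
Variables (K : fieldType) (vT : vectType K).

Lemma injective_lincomb_free n (X : n.-tuple vT) :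
  injective (fun h : 'rV[K]_n => \sum_i h 0 i *: X`_i) <-> free X.
Proof.
set f := fun h : 'rV[K]_n => _.
have fB h h' : f h - f h' = f (h - h').
  by rewrite /f -sumrB; apply: eq_bigr => i _; rewrite !mxE scalerBl.
split=> [f_inj | freeX h h' /eqP].
  apply/freeP => k k0 i; have /rowP/(_ i) : \row_j k j = 0.
    apply: f_inj; rewrite /f /=; transitivity (0 : vT).
      by under eq_bigr do rewrite mxE.
    by rewrite big1 // => j _; rewrite mxE scale0r.
  by rewrite !mxE.
rewrite -subr_eq0 fB => /eqP fh0; apply/eqP; rewrite -subr_eq0; apply/eqP/rowP => i.
by move/freeP: freeX => /(_ (fun j => (h - h') 0 j) fh0 i) ->; rewrite mxE.
Qed.

Lemma injective_lincomb3_free (a b c : vT) :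
  injective (fun h : 'rV[K]_3 =>
    h 0 (inord 0) *: a + h 0 (inord 1) *: b + h 0 (inord 2) *: c)
  <-> free [:: a; b; c].
Proof.
rewrite -[[:: a; b; c]]/(val [tuple a; b; c]) -injective_lincomb_free.
rewrite (_ : (fun h : 'rV[K]_3 => _) = fun h => \sum_i h 0 i *: [tuple a; b; c]`_i) //.
apply/funext => h; rewrite !big_ord_recl big_ord0 addr0 addrA /=.
by congr (h 0 _ *: _ + h 0 _ *: _ + h 0 _ *: _); apply/val_inj; rewrite /= inordK.
Qed.

End LinearCombination.

Section Dot.
Variables (R : realFieldType) (n : nat).
Implicit Types (u v w : 'rV[R]_n) (X : seq 'rV[R]_n).

Definition dot u v : R := \sum_k u 0 k * v 0 k.

Lemma dot0l v : dot 0 v = 0.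
Proof. by rewrite /dot big1 // => k _; rewrite mxE mul0r. Qed.

Lemma dotDl u v w : dot (u + v) w = dot u w + dot v w.
Proof. by rewrite /dot -big_split; apply: eq_bigr => k _; rewrite mxE mulrDl. Qed.

Lemma dotZl a u v : dot (a *: u) v = a * dot u v.
Proof. by rewrite /dot mulr_sumr; apply: eq_bigr => k _; rewrite mxE mulrA. Qed.

Lemma dot_suml I r (P : pred I) (F : I -> 'rV[R]_n) v :
  dot (\sum_(i <- r | P i) F i) v = \sum_(i <- r | P i) dot (F i) v.
Proof. exact: (big_morph (dot^~ v) (fun x y => dotDl x y v) (dot0l v)). Qed.

Lemma dot_eq0 u : (dot u u == 0) = (u == 0).
Proof.
apply/eqP/eqP => [uu0|->]; last exact: dot0l.
have sq0 := psumr_eq0P (fun k _ => sqr_ge0 (u 0 k)) uu0.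
by apply/rowP => k; apply/eqP; rewrite mxE -sqrf_eq0 sq0.
Qed.

Lemma dot_subZ a u v :
  dot (u - a *: v) (u - a *: v) = dot u u - 2 * a * dot u v + a ^+ 2 * dot v v.
Proof.
rewrite /dot !mulr_sumr -!sumrB -big_split /=.
by apply: eq_bigr => k _; rewrite !mxE; ring.
Qed.

Lemma dot_sqr_eq_not_free u v :
  dot u u * dot v v = dot u v ^+ 2 -> ~~ free [:: u; v].
Proof.
move=> cs_eq; have [->|v0] := eqVneq v 0.
  by rewrite free_cons seq1_free eqxx andbF.
have vv0 : dot v v != 0 by rewrite dot_eq0.
set a := dot u v / dot v v.
have : dot (u - a *: v) (u - a *: v) == 0.
  by rewrite dot_subZ /a -[dot u u](mulfK vv0) cs_eq; apply/eqP; field.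
rewrite dot_eq0 subr_eq0 => /eqP ->.
by rewrite free_cons span_seq1 memvZ ?memv_line.
Qed.

Lemma free_cons_orthogonal X w :
  w != 0 -> {in X, forall x, dot x w = 0} -> free X -> free (w :: X).
Proof.
move=> w0 Xw freeX; rewrite free_cons freeX andbT.
apply: contra w0 => /(coord_span (X := in_tuple X)) wX.
rewrite -dot_eq0 {1}wX dot_suml big1 // => i _.
by rewrite dotZl Xw ?mulr0 // mem_nth.
Qed.

End Dot.

Section Derivatives.
Variables (R : realType) (W : normedModType R).

Lemma is_derive_scalel (k : R -> R) (w : W) (x dk : R) :
  is_derive x 1 k dk -> is_derive x 1 (fun s => k s *: w) (dk *: w).
Proof.
move=> kx; have kdiff : differentiable k x by apply/derivable1_diffP; case: kx.
apply: DeriveDef; first exact/derivable1_diffP/differentiableZl.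
rewrite deriveE; last exact: differentiableZl.
by rewrite diffZl //= -deriveE // derive_val.
Qed.

End Derivatives.

Section Cross.
Variable R : realType.
Implicit Types a b : 'rV[R]_7.

Lemma i7_eq (l m : nat) : (l < 7)%N -> (m < 7)%N -> (i7 l == i7 m) = (l == m).
Proof. by move=> l7 m7; rewrite -(inj_eq val_inj) /= !inordK. Qed.

Lemma sum_ord7 (f : 'I_7 -> R) :
  \sum_k f k = f (i7 0) + (f (i7 1) + (f (i7 2) + (f (i7 3)
                + (f (i7 4) + (f (i7 5) + f (i7 6)))))).
Proof.
rewrite !big_ord_recl big_ord0 addr0.
by repeat congr (_ + _); congr f; apply/val_inj; rewrite /= inordK.
Qed.

Lemma row7P a b : (forall m, (m < 7)%N -> a 0 (i7 m) = b 0 (i7 m)) -> a = b.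
Proof. by move=> ab; apply/rowP => k; rewrite -[k]inord_val ab. Qed.

Ltac phi_coord := rewrite /phi /dx3 !mxE ?eqxx /= ?i7_eq //=; ring.

Lemma phi_e0 a b : phi a b (e7 R (i7 0)) =
  a 0 (i7 1) * b 0 (i7 2) - a 0 (i7 2) * b 0 (i7 1) + a 0 (i7 3) * b 0 (i7 4)
  - a 0 (i7 4) * b 0 (i7 3) + a 0 (i7 5) * b 0 (i7 6) - a 0 (i7 6) * b 0 (i7 5).
Proof. phi_coord. Qed.

Lemma phi_e1 a b : phi a b (e7 R (i7 1)) =
  a 0 (i7 2) * b 0 (i7 0) - a 0 (i7 0) * b 0 (i7 2) + a 0 (i7 3) * b 0 (i7 5)
  - a 0 (i7 5) * b 0 (i7 3) - a 0 (i7 4) * b 0 (i7 6) + a 0 (i7 6) * b 0 (i7 4).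
Proof. phi_coord. Qed.

Lemma phi_e2 a b : phi a b (e7 R (i7 2)) =
  a 0 (i7 0) * b 0 (i7 1) - a 0 (i7 1) * b 0 (i7 0) - a 0 (i7 3) * b 0 (i7 6)
  + a 0 (i7 6) * b 0 (i7 3) - a 0 (i7 4) * b 0 (i7 5) + a 0 (i7 5) * b 0 (i7 4).
Proof. phi_coord. Qed.

Lemma phi_e3 a b : phi a b (e7 R (i7 3)) =
  a 0 (i7 4) * b 0 (i7 0) - a 0 (i7 0) * b 0 (i7 4) + a 0 (i7 5) * b 0 (i7 1)
  - a 0 (i7 1) * b 0 (i7 5) - a 0 (i7 6) * b 0 (i7 2) + a 0 (i7 2) * b 0 (i7 6).
Proof. phi_coord. Qed.

Lemma phi_e4 a b : phi a b (e7 R (i7 4)) =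
  a 0 (i7 0) * b 0 (i7 3) - a 0 (i7 3) * b 0 (i7 0) - a 0 (i7 6) * b 0 (i7 1)
  + a 0 (i7 1) * b 0 (i7 6) - a 0 (i7 5) * b 0 (i7 2) + a 0 (i7 2) * b 0 (i7 5).
Proof. phi_coord. Qed.

Lemma phi_e5 a b : phi a b (e7 R (i7 5)) =
  a 0 (i7 6) * b 0 (i7 0) - a 0 (i7 0) * b 0 (i7 6) + a 0 (i7 1) * b 0 (i7 3)
  - a 0 (i7 3) * b 0 (i7 1) - a 0 (i7 2) * b 0 (i7 4) + a 0 (i7 4) * b 0 (i7 2).
Proof. phi_coord. Qed.

Lemma phi_e6 a b : phi a b (e7 R (i7 6)) =
  a 0 (i7 0) * b 0 (i7 5) - a 0 (i7 5) * b 0 (i7 0) - a 0 (i7 1) * b 0 (i7 4)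
  + a 0 (i7 4) * b 0 (i7 1) - a 0 (i7 2) * b 0 (i7 3) + a 0 (i7 3) * b 0 (i7 2).
Proof. phi_coord. Qed.

Definition phi_e := (phi_e0, phi_e1, phi_e2, phi_e3, phi_e4, phi_e5, phi_e6).

Lemma dot_cross_l a b : dot a (cross a b) = 0.
Proof. by rewrite /dot sum_ord7 !mxE !phi_e; ring. Qed.

Lemma dot_cross_r a b : dot b (cross a b) = 0.
Proof. by rewrite /dot sum_ord7 !mxE !phi_e; ring. Qed.

Lemma dot_cross_cross a b :
  dot (cross a b) (cross a b) = dot a a * dot b b - dot a b ^+ 2.
Proof. by rewrite /dot !sum_ord7 !mxE !phi_e; ring. Qed.

Lemma free_cross a b : free [:: a; b; cross a b] = free [:: a; b].
Proof.
apply/idP/idP => [|ab_free].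
  exact: (catl_free (Y := [:: cross a b]) (X := [:: a; b])).
rewrite (perm_free (permEl (perm_rcons (cross a b) [:: a; b]))).
rewrite free_cons_orthogonal //.
  rewrite -dot_eq0 dot_cross_cross subr_eq0.
  exact: contraTneq (@dot_sqr_eq_not_free _ _ a b) ab_free.
by move=> x; rewrite !inE => /orP[] /eqP ->; rewrite ?dot_cross_l ?dot_cross_r.
Qed.

End Cross.

Section PartialDerivatives.
Variables (R : realType) (w1 w2 w3 w4 w5 w6 : R -> 'rV[R]_7).
Let G := F w1 w2 w3 w4 w5 w6.

Ltac is_derive_F :=
  repeat first [ apply: is_deriveD | apply: is_derive_scalel | apply: is_deriveM
               | apply: is_deriveX | apply: is_derive_id | apply: is_derive_cst ].

(* On [R] itself, [*:] is [*] by definition; unfolding it lets [field] finish. *)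
Lemma dy1_F y1 y2 t : dy1 G y1 y2 t = y1 *: w1 t + y1 *: w2 t + y2 *: w3 t + w4 t.
Proof.
rewrite /dy1 derive1E; apply: derive_val; apply: is_derive_eq; first by is_derive_F.
by apply/rowP => k; rewrite !mxE /GRing.scale /=; field.
Qed.

Lemma dy2_F y1 y2 t : dy2 G y1 y2 t = y2 *: w1 t - y2 *: w2 t + y1 *: w3 t + w5 t.
Proof.
rewrite /dy2 derive1E; apply: derive_val; apply: is_derive_eq; first by is_derive_F.
by apply/rowP => k; rewrite !mxE /GRing.scale /=; field.
Qed.

Lemma dt_F y1 y2 t :
    derivable w1 t 1 -> derivable w2 t 1 -> derivable w3 t 1 ->
    derivable w4 t 1 -> derivable w5 t 1 -> derivable w6 t 1 ->
  dt G y1 y2 t =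
    (2^-1 * (y1 ^+ 2 + y2 ^+ 2)) *: derive1 w1 t
    + (2^-1 * (y1 ^+ 2 - y2 ^+ 2)) *: derive1 w2 t + (y1 * y2) *: derive1 w3 t
    + y1 *: derive1 w4 t + y2 *: derive1 w5 t + derive1 w6 t.
Proof.
move=> /derivableP d1 /derivableP d2 /derivableP d3.
move=> /derivableP d4 /derivableP d5 /derivableP d6.
by rewrite /dt !derive1E; apply: derive_val.
Qed.

End PartialDerivatives.

(* The right-hand side is [dt] of [F] once the six ODEs are substituted. *)
Lemma cross_dy1_dy2_expansion (R : realType) (y1 y2 : R)
    (a1 a2 a3 a4 a5 : 'rV[R]_7) :
  cross (y1 *: a1 + y1 *: a2 + y2 *: a3 + a4) (y2 *: a1 - y2 *: a2 + y1 *: a3 + a5)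
  = (2^-1 * (y1 ^+ 2 + y2 ^+ 2)) *: (2 *: cross a2 a3)
    + (2^-1 * (y1 ^+ 2 - y2 ^+ 2)) *: (2 *: cross a1 a3)
    + (y1 * y2) *: - (2 *: cross a1 a2)
    + y1 *: (cross a1 a5 + cross a2 a5 - cross a3 a4)
    + y2 *: (- cross a1 a4 + cross a2 a4 + cross a3 a5) + cross a4 a5.
Proof.
apply: row7P => -[|[|[|[|[|[|[|m]]]]]]] m7 //;
  by rewrite !mxE !phi_e !mxE; field.
Qed.

Theorem mainTheorem5 (R : realType) (w1 w2 w3 w4 w5 w6 : R -> 'rV[R]_7) :
  (forall t : R, derivable w1 t 1) -> (forall t : R, derivable w2 t 1) ->
  (forall t : R, derivable w3 t 1) -> (forall t : R, derivable w4 t 1) ->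
  (forall t : R, derivable w5 t 1) -> (forall t : R, derivable w6 t 1) ->
  (forall t : R, derive1 w1 t = 2 *: cross (w2 t) (w3 t)) ->
  (forall t : R, derive1 w2 t = 2 *: cross (w1 t) (w3 t)) ->
  (forall t : R, derive1 w3 t = - (2 *: cross (w1 t) (w2 t))) ->
  (forall t : R, derive1 w4 t =
     cross (w1 t) (w5 t) + cross (w2 t) (w5 t) - cross (w3 t) (w4 t)) ->
  (forall t : R, derive1 w5 t =
     - cross (w1 t) (w4 t) + cross (w2 t) (w4 t) + cross (w3 t) (w5 t)) ->
  (forall t : R, derive1 w6 t = cross (w4 t) (w5 t)) ->
  let G := F w1 w2 w3 w4 w5 w6 in
  [/\ (forall y1 y2 t : R,
         cross (dy1 G y1 y2 t) (dy2 G y1 y2 t) = dt G y1 y2 t),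
      (forall y1 y2 t : R,
         (injective (dG G y1 y2 t) <->
          free [:: dy1 G y1 y2 t; dy2 G y1 y2 t]))
    & (injective (dG G 0 0 0) <-> free [:: w4 0; w5 0])].
Proof.
move=> D1 D2 D3 D4 D5 D6 E1 E2 E3 E4 E5 E6 G.
have dt_cross y1 y2 t : cross (dy1 G y1 y2 t) (dy2 G y1 y2 t) = dt G y1 y2 t.
  rewrite dy1_F dy2_F dt_F // E1 E2 E3 E4 E5 E6.
  exact: cross_dy1_dy2_expansion.
have dG_free y1 y2 t :
    injective (dG G y1 y2 t) <-> free [:: dy1 G y1 y2 t; dy2 G y1 y2 t].
  by rewrite -free_cross /dG -dt_cross -injective_lincomb3_free.
by split=> //; rewrite dG_free dy1_F dy2_F !(scale0r, add0r, subr0, oppr0).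
Qed.
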